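(* Let $G$ be a connected, locally finite Cayley graph of a group $\Gamma$, and let $r\in\mathbb{N}$. Then the $r$-local cover $G_r$ of $G$ is (isomorphic to) a connected, locally finite Cayley graph of a finitely presented group $\Gamma_r$ of which $\Gamma$ is a quotient.
   Context: $\mathrm{Cay}(\Gamma,S)$ (for $S\subseteq\Gamma$) has vertex set $\Gamma$, edge set $\{(g,s):g\in\Gamma,s\in S\}$, edge $(g,s)$ joining $g$ and $gs$; graphs may have loops and parallel edges and are viewed as 1-complexes. A cycle may be a loop or a pair of parallel edges; a closed walk once around a cycle $O$ traverses every edge of $O$ exactly once. For a connected graph $G$ and vertex $x_0$, $\pi_1^r(G,x_0)$ is the subgroup of $\pi_1(G,x_0)$ generated by the classes of closed walks $W_0QW_0^-$ with $W_0$ a walk from $x_0$ to a vertex $y$, $Q$ a closed walk at $y$ once around a cycle of length at most $r$, $W_0^-$ the reverse of $W_0$. The $r$-local covering $p_r:G_r\to G$ is the connected normal covering with characteristic subgroup $\pi_1^r(G,x_0)$, and $G_r$ is the $r$-local cover. *)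

From Stdlib Require Import Relations.
From Stdlib Require List.
From mathcomp Require Import ssreflect ssrfun ssrbool eqtype ssrnat seq choice fintype.

Set Implicit Arguments.
Unset Strict Implicit.
Unset Printing Implicit Defensive.

Record grp := Grp {
  gcar :> Type;
  gmul : gcar -> gcar -> gcar;
  gone : gcar;
  ginv : gcar -> gcar;
  gmulA : forall x y z, gmul x (gmul y z) = gmul (gmul x y) z;
  gmul1 : forall x, gmul gone x = x;
  gmulV : forall x, gmul (ginv x) x = gone }.

Arguments gmul {g}.
Arguments ginv {g}.

Definition grp_hom (G H : grp) (f : G -> H) : Prop :=
  forall x y, f (gmul x y) = gmul (f x) (f y).

Definition is_quotient_of (Gam Gr : grp) : Prop :=
  exists f : Gr -> Gam, grp_hom f /\ (forall y : Gam, exists x : Gr, f x = y).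

(* (x, true) stands for the generator x, (x, false) for its inverse.    *)
Fixpoint weval (H : grp) (X : Type) (gam : X -> H) (w : seq (X * bool)) : H :=
  match w with
  | [::] => gone H
  | (x, b) :: w' => gmul (if b then gam x else ginv (gam x)) (weval gam w')
  end.

(* elementary moves: free cancellation and deletion of a relator;       *)
(* their equivalence closure relates w to [::] iff w lies in the normal *)
(* closure of R in the free group on X.                                 *)
Inductive pstep (X : Type) (R : seq (seq (X * bool))) :
    seq (X * bool) -> seq (X * bool) -> Prop :=
  | PS_free u v x b : pstep R (u ++ (x, b) :: (x, ~~ b) :: v) (u ++ v)
  | PS_rel u v rr : List.In rr R -> pstep R (u ++ rr ++ v) (u ++ v).

Definition pres_eq (X : Type) (R : seq (seq (X * bool))) :=
  clos_refl_sym_trans _ (pstep R).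

Definition finitely_presented (H : grp) : Prop :=
  exists (X : finType) (gam : X -> H) (R : seq (seq (X * bool))),
    (forall h : H, exists w, weval gam w = h) /\
    (forall w, weval gam w = gone H <-> pres_eq R w [::]).

(* Multigraphs (loops and parallel edges allowed); every edge carries   *)
(* a reference orientation tl -> hd, but is an undirected 1-cell.       *)
Record mgraph := MGraph {
  vtx : Type;
  edg : Type;
  tl : edg -> vtx;
  hd : edg -> vtx }.

Arguments tl {m}.
Arguments hd {m}.

Definition Cay (Gam : grp) (S : Gam -> Prop) : mgraph :=
  @MGraph Gam (Gam * {s : Gam | S s})%type (fun e => e.1)
          (fun e => gmul e.1 (sval e.2)).

Definition dart (G : mgraph) := (edg G * bool)%type.
Definition dsrc (G : mgraph) (d : dart G) : vtx G := if d.2 then tl d.1 else hd d.1.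
Definition dtgt (G : mgraph) (d : dart G) : vtx G := if d.2 then hd d.1 else tl d.1.
Definition dflip (G : mgraph) (d : dart G) : dart G := (d.1, ~~ d.2).

Fixpoint is_walk (G : mgraph) (x : vtx G) (w : seq (dart G)) (y : vtx G) : Prop :=
  match w with
  | [::] => x = y
  | d :: w' => dsrc d = x /\ is_walk (dtgt d) w' y
  end.

Definition rev_walk (G : mgraph) (w : seq (dart G)) : seq (dart G) :=
  rev (map (@dflip G) w).

Definition connected (G : mgraph) : Prop :=
  forall x y : vtx G, exists w, is_walk x w y.

Definition locally_finite (G : mgraph) : Prop :=
  forall x : vtx G, exists l : seq (edg G),
    forall e, (tl e = x \/ hd e = x) -> List.In e l.

Definition mg_iso (G H : mgraph) : Prop :=
  exists (fv : vtx G -> vtx H) (fe : edg G -> edg H),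
    bijective fv /\ bijective fe /\
    forall e, tl (fe e) = fv (tl e) /\ hd (fe e) = fv (hd e).

Inductive hstep (G : mgraph) : seq (dart G) -> seq (dart G) -> Prop :=
  | HStep u v (d : dart G) : hstep (u ++ d :: dflip d :: v) (u ++ v).

Definition homotopic (G : mgraph) := clos_refl_sym_trans _ (@hstep G).

(* Q is a closed walk at y once around a cycle of length at most r:     *)
(* a closed walk of length k, 1 <= k <= r, with pairwise distinct edges  *)
(* and pairwise distinct visited vertices (k = 1: a loop, k = 2: a pair  *)
(* of parallel edges).                                                   *)
Definition once_around (G : mgraph) (y : vtx G) (Q : seq (dart G)) (r : nat) : Prop :=
  is_walk y Q y /\ 0 < size Q <= r /\
  List.NoDup (map (fun d : dart G => d.1) Q) /\ List.NoDup (map (@dsrc G) Q).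

(* pi1r_mem G r x0 W : the homotopy class of the closed walk W at x0     *)
(* lies in pi_1^r(G, x0), the subgroup generated by the classes of the  *)
(* lassos W0 Q W0^-.                                                     *)
Inductive pi1r_mem (G : mgraph) (r : nat) (x0 : vtx G) : seq (dart G) -> Prop :=
  | P_lasso W0 y Q : is_walk x0 W0 y -> once_around y Q r ->
                     pi1r_mem r x0 (W0 ++ Q ++ rev_walk W0)
  | P_nil : pi1r_mem r x0 [::]
  | P_cat a b : pi1r_mem r x0 a -> pi1r_mem r x0 b -> pi1r_mem r x0 (a ++ b)
  | P_inv a : pi1r_mem r x0 a -> pi1r_mem r x0 (rev_walk a)
  | P_hom a b : pi1r_mem r x0 a -> homotopic a b -> pi1r_mem r x0 b.

(* The r-local cover G_r: the covering with characteristic subgroup     *)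
(* pi_1^r(G,x0), realised by the standard construction: vertices are    *)
(* classes of walks from x0, W ~ W' iff same end and W W'^- in pi_1^r;   *)
(* the lift of the edge e at the class [W] (W ending at tl e) joins [W]  *)
(* and [W e].                                                            *)
Definition rclass (G : mgraph) (r : nat) (x0 y : vtx G) (W : seq (dart G)) :
  seq (dart G) -> Prop :=
  fun W' => is_walk x0 W' y /\ pi1r_mem r x0 (W ++ rev_walk W').

Definition lc_vtx (G : mgraph) (r : nat) (x0 : vtx G) :=
  {C : seq (dart G) -> Prop | exists y W, is_walk x0 W y /\ C = rclass r x0 y W}.

Definition lc_edg (G : mgraph) (r : nat) (x0 : vtx G) :=
  {t : ((seq (dart G) -> Prop) * edg G * (seq (dart G) -> Prop))%type |
     exists W, is_walk x0 W (tl t.1.2) /\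
               t.1.1 = rclass r x0 (tl t.1.2) W /\
               t.2 = rclass r x0 (hd t.1.2) (W ++ [:: (t.1.2, true)])}.

Lemma is_walk_rcons (G : mgraph) (x y : vtx G) (w : seq (dart G)) (d : dart G) :
  is_walk x w y -> dsrc d = y -> is_walk x (w ++ [:: d]) (dtgt d).
Proof.
elim: w x => [|d' w IH] x /=; first by move=> -> ->.
by case=> -> Hw Hd; split=> //; apply: IH.
Qed.

Lemma lc_tl_ok (G : mgraph) (r : nat) (x0 : vtx G) (t : lc_edg r x0) :
  exists y W, is_walk x0 W y /\ (sval t).1.1 = rclass r x0 y W.
Proof. case: t => [t [W [HW [H1 _]]]] /=; by exists (tl t.1.2), W. Qed.

Lemma lc_hd_ok (G : mgraph) (r : nat) (x0 : vtx G) (t : lc_edg r x0) :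
  exists y W, is_walk x0 W y /\ (sval t).2 = rclass r x0 y W.
Proof.
case: t => [t [W [HW [_ H2]]]] /=.
exists (hd t.1.2), (W ++ [:: (t.1.2, true)]); split=> //.
exact: (@is_walk_rcons G x0 (tl t.1.2) W (t.1.2, true) HW).
Qed.

Definition lc_tl (G : mgraph) (r : nat) (x0 : vtx G) (t : lc_edg r x0) : lc_vtx r x0 :=
  exist _ (sval t).1.1 (lc_tl_ok t).
Definition lc_hd (G : mgraph) (r : nat) (x0 : vtx G) (t : lc_edg r x0) : lc_vtx r x0 :=
  exist _ (sval t).2 (lc_hd_ok t).

Definition local_cover (G : mgraph) (r : nat) (x0 : vtx G) : mgraph :=
  @MGraph (lc_vtx r x0) (lc_edg r x0) (@lc_tl G r x0) (@lc_hd G r x0).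

From Stdlib Require Import Relations ClassicalEpsilon ProofIrrelevance
  FunctionalExtensionality PropExtensionality.
From Stdlib Require List FinFun.
From mathcomp Require Import ssreflect ssrfun ssrbool eqtype ssrnat seq fintype tuple.

(* Let Gamma_r be the group of words in the generators S modulo the congruence
   "the walks spelled from 1 by the two words agree modulo pi_1^r".  A vertex of
   G_r is a pi_1^r-class of walks from 1, i.e. a class of words, and lifting the
   edge labelled s becomes right multiplication by s; hence G_r = Cay(Gamma_r, S).
   Evaluating words maps Gamma_r onto Gamma.  Finally, pi_1^r is generated by
   conjugates of lassos around cycles of length at most r, and the words of such
   cycles are trivial words of length at most r over the finite alphabet S; so
   Gamma_r = < S | trivial words of length <= r >. *)

Set Implicit Arguments.
Unset Strict Implicit.
Unset Printing Implicit Defensive.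

Lemma sval_inj (T : Type) (P : T -> Prop) : injective (@sval T P).
Proof. exact: eq_sig_hprop (fun x => proof_irrelevance (P x)). Qed.

Lemma pred_ext (T : Type) (P Q : T -> Prop) : (forall x, P x <-> Q x) -> P = Q.
Proof.
by move=> PQ; apply: functional_extensionality => x; apply: propositional_extensionality.
Qed.

Lemma InP (T : eqType) (x : T) (s : seq T) : reflect (List.In x s) (x \in s).
Proof.
elim: s => [|y s IH] /=; first by right.
rewrite in_cons; apply: (iffP orP) => [[/eqP ->|/IH]|[->|/IH]]; by [left | right].
Qed.

Section GroupTheory.
Variable G : grp.
Implicit Types x y z : G.

Lemma gmulVr x : gmul x (ginv x) = gone G.
Proof.
have V := gmulV (ginv x).
by rewrite -[gmul x _]gmul1 -{1}V -gmulA [gmul (ginv x) (gmul x _)]gmulA gmulV gmul1.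
Qed.

Lemma gmulr1 x : gmul x (gone G) = x.
Proof. by rewrite -(gmulV x) gmulA gmulVr gmul1. Qed.

Lemma gmulKg x y : gmul (ginv x) (gmul x y) = y.
Proof. by rewrite gmulA gmulV gmul1. Qed.

Lemma gmulKVg x y : gmul x (gmul (ginv x) y) = y.
Proof. by rewrite gmulA gmulVr gmul1. Qed.

Lemma gmulI x : injective (gmul x).
Proof. by move=> y z E; rewrite -(gmulKg x y) E gmulKg. Qed.

Lemma ginv_unique x y : gmul y x = gone G -> y = ginv x.
Proof. by move=> E; rewrite -(gmulr1 y) -(gmulVr x) gmulA E gmul1. Qed.

Lemma ginvK x : ginv (ginv x) = x.
Proof. by symmetry; apply: ginv_unique; apply: gmulVr. Qed.

Lemma ginvM x y : ginv (gmul x y) = gmul (ginv y) (ginv x).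
Proof. by symmetry; apply: ginv_unique; rewrite -gmulA gmulKg gmulV. Qed.

Lemma ginv1 : ginv (gone G) = gone G.
Proof. by symmetry; apply: ginv_unique; rewrite gmul1. Qed.

Lemma gmulV_eq1 x y : gmul x (ginv y) = gone G -> x = y.
Proof. by move=> E; rewrite -(ginvK y); apply: ginv_unique. Qed.

Lemma gmul_idr x y : gmul x y = x -> y = gone G.
Proof. by move=> E; apply: (@gmulI x); rewrite gmulr1. Qed.

End GroupTheory.

Section Words.
Variable L : Type.
Implicit Types a b w : seq (L * bool).

Definition invw w := rev (map (fun p => (p.1, ~~ p.2)) w).

Lemma invw_cons p w : invw (p :: w) = invw w ++ [:: (p.1, ~~ p.2)].
Proof. by rewrite /invw /= rev_cons cats1. Qed.

Lemma invwK : involutive invw.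
Proof.
move=> w; rewrite /invw map_rev revK -map_comp.
by elim: w => //= -[x b] w ->; rewrite negbK.
Qed.

Variable H : grp.
Variable gam : L -> H.

Lemma weval_cat a b : weval gam (a ++ b) = gmul (weval gam a) (weval gam b).
Proof. by elim: a => [|[x c] a IH] /=; rewrite ?gmul1 // IH gmulA. Qed.

Lemma weval_invw w : weval gam (invw w) = ginv (weval gam w).
Proof.
elim: w => [|[x c] w IH] /=; first by rewrite ginv1.
rewrite invw_cons weval_cat IH ginvM /= gmulr1.
by case: c; rewrite ?ginvK.
Qed.

End Words.

Section Relabel.
Variables (L L' : Type) (f : L -> L').

Definition relabel (w : seq (L * bool)) : seq (L' * bool) := map (fun p => (f p.1, p.2)) w.

Lemma relabel_cat a b : relabel (a ++ b) = relabel a ++ relabel b.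
Proof. exact: map_cat. Qed.

Lemma relabel_invw w : relabel (invw w) = invw (relabel w).
Proof. by rewrite /relabel /invw !map_rev -!map_comp. Qed.

Lemma weval_relabel (H : grp) (gam : L' -> H) w : weval gam (relabel w) = weval (gam \o f) w.
Proof. by elim: w => [|[x b] w IH] //=; rewrite IH. Qed.

End Relabel.

Lemma relabelK (L L' : Type) (f : L -> L') (g : L' -> L) :
  cancel f g -> cancel (relabel f) (relabel g).
Proof.
move=> fK w; rewrite /relabel -map_comp -[RHS]map_id.
by apply: eq_map => -[x b] /=; rewrite fK.
Qed.

Section Presentations.
Variables (X : Type) (R : seq (seq (X * bool))).
Implicit Types a b u v w : seq (X * bool).

Lemma pres_eq_ctx u v a b : pres_eq R a b -> pres_eq R (u ++ a ++ v) (u ++ b ++ v).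
Proof.
elim=> [a' b' [u' v' x c | u' v' rr Rrr] | a' | a' b' _ IH | a' b' c' _ IH1 _ IH2].
- apply: rst_step; rewrite -!catA.
  by have := PS_free R (u ++ u') (v' ++ v) x c; rewrite -!catA.
- apply: rst_step; rewrite -!catA.
  by have := PS_rel (u ++ u') (v' ++ v) Rrr; rewrite -!catA.
- exact: rst_refl.
- exact: rst_sym.
- exact: rst_trans IH2.
Qed.

Lemma pres_eq_cat a a' b b' :
  pres_eq R a a' -> pres_eq R b b' -> pres_eq R (a ++ b) (a' ++ b').
Proof.
move=> aa' bb'; apply: (@rst_trans _ _ _ (a' ++ b)).
  by have := pres_eq_ctx [::] b aa'.
by have := pres_eq_ctx a' [::] bb'; rewrite !cats0.
Qed.

Lemma pres_eq_catinv w : pres_eq R (w ++ invw w) [::].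
Proof.
elim: w => [|[x b] w IH]; first exact: rst_refl.
rewrite invw_cons catA /=.
apply: (@rst_trans _ _ _ [:: (x, b); (x, ~~ b)]).
  by have := pres_eq_ctx [:: (x, b)] [:: (x, ~~ b)] IH.
apply: rst_step; exact: (PS_free R [::] [::] x b).
Qed.

Lemma pres_eq_invw w : pres_eq R w [::] -> pres_eq R (invw w) [::].
Proof.
move=> w1; apply: (@rst_trans _ _ _ (invw w ++ w)).
  by have := pres_eq_cat (rst_refl _ _ (invw w)) (rst_sym _ _ _ _ w1); rewrite cats0.
by have := pres_eq_catinv (invw w); rewrite invwK.
Qed.

Lemma pres_eq_conj u rr : List.In rr R -> pres_eq R (u ++ rr ++ invw u) [::].
Proof.
move=> Rrr; apply: (@rst_trans _ _ _ (u ++ invw u)); last exact: pres_eq_catinv.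
apply: rst_step; exact: PS_rel.
Qed.

End Presentations.

Record word_congruence (L : Type) := WordCongruence {
  cong_rel : relation (seq (L * bool));
  cong_refl : forall a, cong_rel a a;
  cong_sym : forall a b, cong_rel a b -> cong_rel b a;
  cong_trans : forall a b d, cong_rel a b -> cong_rel b d -> cong_rel a d;
  cong_catl : forall u a b, cong_rel a b -> cong_rel (u ++ a) (u ++ b);
  cong_catr : forall a b v, cong_rel a b -> cong_rel (a ++ v) (b ++ v);
  cong_cancel : forall x b, cong_rel [:: (x, b); (x, ~~ b)] [::] }.

Section WordGroup.
Variables (L : Type) (c : word_congruence L).
Local Notation word := (seq (L * bool)).
Local Notation "a ~ b" := (cong_rel c a b) (at level 70).

(* Elements are the congruence classes themselves, as predicates: no quotient type is needed. *)
Definition word_class := {P : word -> Prop | exists a, P = cong_rel c a}.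

Definition mkw (a : word) : word_class := exist _ (cong_rel c a) (ex_intro _ a erefl).

Definition repw (x : word_class) : word :=
  sval (constructive_indefinite_description _ (svalP x)).

Lemma mkw_repw x : mkw (repw x) = x.
Proof.
apply: sval_inj; rewrite /repw.
by case: constructive_indefinite_description => a /= ->.
Qed.

Lemma mkw_surj x : exists a, x = mkw a.
Proof. by exists (repw x); rewrite mkw_repw. Qed.

Lemma mkw_eq a b : mkw a = mkw b <-> a ~ b.
Proof.
split=> [/(congr1 sval) /= -> | ab]; first exact: cong_refl.
apply: sval_inj; apply: pred_ext => w /=.
by split=> [aw | bw]; [apply: cong_trans (cong_sym ab) aw | apply: cong_trans ab bw].
Qed.

Lemma repw_mkw a : repw (mkw a) ~ a.
Proof. by apply/mkw_eq; rewrite mkw_repw. Qed.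

Lemma cong_invw a : invw a ++ a ~ [::].
Proof.
elim: a => [|[x b] a IH]; first exact: cong_refl.
apply: cong_trans IH; rewrite invw_cons -catA.
by apply: cong_catl; have := cong_catr a (cong_cancel c x (~~ b)); rewrite negbK.
Qed.

Definition wmul x y := mkw (repw x ++ repw y).
Definition wone := mkw [::].
Definition winv x := mkw (invw (repw x)).

Lemma wmul_mkw a b : wmul (mkw a) (mkw b) = mkw (a ++ b).
Proof.
apply/mkw_eq; apply: cong_trans (cong_catl _ (repw_mkw b)) _.
exact: cong_catr (repw_mkw a).
Qed.

Lemma wmulA : associative wmul.
Proof.
move=> x y z.
have [a ->] := mkw_surj x; have [b ->] := mkw_surj y; have [d ->] := mkw_surj z.
by rewrite !wmul_mkw catA.
Qed.

Lemma wmul1 : left_id wone wmul.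
Proof. by move=> x; have [a ->] := mkw_surj x; rewrite wmul_mkw. Qed.

Lemma wmulV x : wmul (winv x) x = wone.
Proof. by rewrite /winv -{2}(mkw_repw x) wmul_mkw; apply/mkw_eq; apply: cong_invw. Qed.

Definition word_grp : grp := Grp wmulA wmul1 wmulV.

Lemma gmul_mkw a b : gmul (mkw a : word_grp) (mkw b) = mkw (a ++ b).
Proof. exact: wmul_mkw. Qed.

Lemma winv_mkw1 x b : winv (mkw [:: (x, b)]) = mkw [:: (x, ~~ b)].
Proof.
symmetry; apply: (@ginv_unique word_grp); rewrite gmul_mkw; apply/mkw_eq.
by have := cong_cancel c x (~~ b); rewrite negbK.
Qed.

Lemma weval_mkw w : weval (fun x => mkw [:: (x, true)] : word_grp) w = mkw w.
Proof.
elim: w => [|[x b] w IH] //=.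
by rewrite IH; case: b; rewrite ?winv_mkw1 wmul_mkw.
Qed.

End WordGroup.

Section FiniteIndex.
Variables (T : Type) (l : seq T).
Hypothesis l_cover : forall x, List.In x l.

Definition fin_label (i : 'I_(size l)) : T := tnth (in_tuple l) i.

Lemma fin_label_surj x : exists i, fin_label i = x.
Proof.
have [n [ltnl nthx]] : exists n, n < size l /\ nth x l n = x.
  elim: l (l_cover x) => //= y l' IH [-> | /IH [n [ltn nthx]]]; first by exists 0.
  by exists n.+1.
by exists (Ordinal ltnl); rewrite /fin_label (tnth_nth x).
Qed.

Definition fin_index_of x : 'I_(size l) :=
  sval (constructive_indefinite_description _ (fin_label_surj x)).

Lemma fin_index_ofK x : fin_label (fin_index_of x) = x.
Proof. by rewrite /fin_index_of; case: constructive_indefinite_description. Qed.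

(* One canonical index per element, so that labels and indices correspond bijectively. *)
Definition fin_index := {i : 'I_(size l) | fin_index_of (fin_label i) == i}.

Definition fin_encode x : fin_index :=
  exist _ (fin_index_of x) (introT eqP (congr1 fin_index_of (fin_index_ofK x))).

Definition fin_decode (i : fin_index) : T := fin_label (sval i).

Lemma fin_encodeK : cancel fin_encode fin_decode.
Proof. exact: fin_index_ofK. Qed.

Lemma fin_decodeK : cancel fin_decode fin_encode.
Proof. by move=> i; apply: val_inj; apply/eqP; apply: (svalP i). Qed.

End FiniteIndex.

Fixpoint short_words (X : finType) (n : nat) : seq (seq X) :=
  if n is n'.+1 then [::] :: [seq x :: w | x <- enum X, w <- short_words X n']
  else [:: [::]].

Lemma mem_short_words (X : finType) n (w : seq X) : size w <= n -> w \in short_words X n.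
Proof.
elim: n w => [|n IH] [|x w] //= wn; rewrite ?mem_seq1 // in_cons /=.
by apply: allpairs_f; [rewrite mem_enum | exact: IH].
Qed.

Section Walks.
Variable G : mgraph.
Implicit Types (a b u v W : seq (dart G)) (x y z : vtx G).

Lemma dflipK : involutive (@dflip G).
Proof. by case=> e b; rewrite /dflip /= negbK. Qed.

Lemma rev_walk_cat a b : rev_walk (a ++ b) = rev_walk b ++ rev_walk a.
Proof. by rewrite /rev_walk map_cat rev_cat. Qed.

Lemma rev_walk_cons d a : rev_walk (d :: a) = rev_walk a ++ [:: dflip d].
Proof. by rewrite /rev_walk /= rev_cons cats1. Qed.

Lemma rev_walkK : involutive (@rev_walk G).
Proof.
move=> a; rewrite /rev_walk map_rev revK -map_comp.
by elim: a => //= d a ->; rewrite dflipK.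
Qed.

Lemma is_walk_cat x y z a b : is_walk x a y -> is_walk y b z -> is_walk x (a ++ b) z.
Proof.
elim: a x => [|d a IH] x /=; first by move=> ->.
by case=> -> ay bz; split=> //; apply: IH bz.
Qed.

Lemma is_walk_target x a y y' : is_walk x a y -> is_walk x a y' -> y = y'.
Proof.
elim: a x => [|d a IH] x /=; first by move=> <- <-.
by case=> _ ay [_ ay']; apply: IH ay ay'.
Qed.

Lemma homotopic_ctx u v a b : homotopic a b -> homotopic (u ++ a ++ v) (u ++ b ++ v).
Proof.
elim=> [a' b' [u' v' d] | a' | a' b' _ IH | a' b' c' _ IH1 _ IH2].
- apply: rst_step; rewrite -!catA.
  by have := HStep (u ++ u') (v' ++ v) d; rewrite -!catA.
- exact: rst_refl.
- exact: rst_sym.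
- exact: rst_trans IH2.
Qed.

Lemma homotopic_catrev W : homotopic (W ++ rev_walk W) [::].
Proof.
elim: W => [|d W IH]; first exact: rst_refl.
rewrite rev_walk_cons catA.
apply: (@rst_trans _ _ _ [:: d; dflip d]).
  by have := homotopic_ctx [:: d] [:: dflip d] IH.
apply: rst_step; exact: (HStep [::] [::] d).
Qed.

Lemma homotopic_del u v W : homotopic (u ++ (W ++ rev_walk W) ++ v) (u ++ v).
Proof. exact: (homotopic_ctx u v (homotopic_catrev W)). Qed.

Variables (r : nat) (x0 : vtx G).

Lemma pi1r_catrev W : pi1r_mem r x0 (W ++ rev_walk W).
Proof. exact: P_hom (P_nil r x0) (rst_sym _ _ _ _ (homotopic_catrev W)). Qed.

Lemma pi1r_sym a b : pi1r_mem r x0 (a ++ rev_walk b) -> pi1r_mem r x0 (b ++ rev_walk a).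
Proof. by move/P_inv; rewrite rev_walk_cat rev_walkK. Qed.

Lemma pi1r_replace a b c :
  pi1r_mem r x0 (a ++ rev_walk b) -> pi1r_mem r x0 (b ++ c) -> pi1r_mem r x0 (a ++ c).
Proof.
move=> ab bc; apply: P_hom (P_cat ab bc) _.
by have := homotopic_del a c (rev_walk b); rewrite rev_walkK -!catA.
Qed.

Lemma pi1r_conj W y c : is_walk x0 W y -> pi1r_mem r y c ->
  pi1r_mem r x0 (W ++ c ++ rev_walk W).
Proof.
move=> x0Wy; elim=> {c} [W0 y' Q yW0 Q_cyc | | a b _ IHa _ IHb | a _ IH | a b _ IH ab].
- have -> : W ++ (W0 ++ Q ++ rev_walk W0) ++ rev_walk W =
            (W ++ W0) ++ Q ++ rev_walk (W ++ W0) by rewrite rev_walk_cat -!catA.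
  exact: P_lasso (is_walk_cat x0Wy yW0) Q_cyc.
- exact: pi1r_catrev.
- apply: P_hom (P_cat IHa IHb) _.
  by have := homotopic_del (W ++ a) (b ++ rev_walk W) (rev_walk W); rewrite rev_walkK -!catA.
- by move/P_inv: IH; rewrite !rev_walk_cat rev_walkK catA.
- exact: P_hom IH (homotopic_ctx _ _ ab).
Qed.

Lemma rclass_eq y W W' :
  pi1r_mem r x0 (W ++ rev_walk W') -> rclass r x0 y W = rclass r x0 y W'.
Proof.
move=> WW'; apply: pred_ext => V; rewrite /rclass.
split=> -[x0Vy piV]; split=> //; apply: pi1r_replace piV => //; exact: pi1r_sym.
Qed.

Lemma rclass_pi1r y y' W W' : is_walk x0 W y ->
  rclass r x0 y W = rclass r x0 y' W' -> pi1r_mem r x0 (W' ++ rev_walk W).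
Proof.
by move=> x0Wy WW'; have [] : rclass r x0 y' W' W by rewrite -WW'; split=> //; exact: pi1r_catrev.
Qed.

Lemma lc_edg_eq (t t' : lc_edg r x0) : (sval t).1 = (sval t').1 -> t = t'.
Proof.
case: t t' => [[[C1 e] C2] [W [x0W [/= E1 E2]]]] [[[C1' e'] C2'] [W' [x0W' [/= E1' E2']]]].
case=> C1C1' ee'; subst e' C1 C1' C2 C2'; apply: sval_inj => /=; congr (_, _, _); first exact: C1C1'.
apply: rclass_eq; apply: P_hom (rclass_pi1r x0W' (esym C1C1')) _.
rewrite rev_walk_cat -!catA; apply: rst_sym.
exact: homotopic_del W (rev_walk W') [:: (e, true)].
Qed.

End Walks.

Section CayleyWalks.
Variables (H : grp) (T : H -> Prop).
Local Notation G := (Cay T).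
Local Notation A := {t : H | T t}.
Local Notation one := (gone H).
Local Notation ev := (weval (fun s : A => sval s)).
Implicit Types (g h y : H) (w : seq (A * bool)) (c : seq (dart G)).

Definition letter_val (p : A * bool) : H := if p.2 then sval p.1 else ginv (sval p.1).

Definition cay_step g (p : A * bool) : dart G :=
  if p.2 then ((g, p.1), true) else ((gmul g (ginv (sval p.1)), p.1), false).

Fixpoint spell g w : seq (dart G) :=
  if w is p :: w' then cay_step g p :: spell (gmul g (letter_val p)) w' else [::].

Definition walk_word c : seq (A * bool) := map (fun d : dart G => (d.1.2, d.2)) c.

Definition cay_tr h (d : dart G) : dart G := ((gmul h d.1.1, d.1.2), d.2).

Lemma spell_cat g w w' : spell g (w ++ w') = spell g w ++ spell (gmul g (ev w)) w'.
Proof.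
elim: w g => [|[s b] w IH] g /=; first by rewrite gmulr1.
by rewrite IH gmulA.
Qed.

Lemma spell_walk g w : @is_walk G g (spell g w) (gmul g (ev w)).
Proof.
elim: w g => [|[s [|]] w IH] g /=; first by rewrite gmulr1.
  by split=> //; rewrite gmulA; apply: IH.
split; first by rewrite /dsrc /= -gmulA gmulV gmulr1.
by rewrite gmulA; apply: IH.
Qed.

Lemma walk_word_spell g w : walk_word (spell g w) = w.
Proof. by elim: w g => [|[s [|]] w IH] g //=; rewrite IH. Qed.

Lemma spell_walk_word g c y : @is_walk G g c y -> spell g (walk_word c) = c.
Proof.
elim: c g => [|[[h s] [|]] c IH] g //= [gh cy];
  rewrite /dsrc /dtgt /= in gh cy; rewrite /letter_val /cay_step /=.
  by rewrite -gh (IH _ cy).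
by rewrite /cay_step /= -gh -gmulA gmulVr gmulr1 (IH _ cy).
Qed.

Lemma walk_word_end g c y : @is_walk G g c y -> gmul g (ev (walk_word c)) = y.
Proof.
move=> gcy; apply: (is_walk_target (spell_walk g (walk_word c))).
by rewrite (spell_walk_word gcy).
Qed.

Lemma walk_word_cat a b : walk_word (a ++ b) = walk_word a ++ walk_word b.
Proof. exact: map_cat. Qed.

Lemma walk_word_rev c : walk_word (rev_walk c) = invw (walk_word c).
Proof. by rewrite /walk_word /invw /rev_walk !map_rev -!map_comp. Qed.

Lemma cay_step_cancel g s b :
  cay_step (gmul g (letter_val (s, b))) (s, ~~ b) = dflip (cay_step g (s, b)).
Proof. by case: b; rewrite /cay_step /letter_val /dflip /= ?gmulKVg -?gmulA ?gmulVr ?gmulr1. Qed.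

Lemma homotopic_relabel (X : Type) (R : seq (seq (X * bool))) (f : A -> X) a b :
  homotopic a b -> pres_eq R (relabel f (walk_word a)) (relabel f (walk_word b)).
Proof.
elim=> [a' b' [u v [e s]] | a' | a' b' _ IH | a' b' c' _ IH1 _ IH2].
- by apply: rst_step; rewrite !walk_word_cat !relabel_cat; apply: PS_free.
- exact: rst_refl.
- exact: rst_sym.
- exact: rst_trans IH2.
Qed.

Lemma weval_homotopic a b : homotopic a b -> ev (walk_word a) = ev (walk_word b).
Proof.
elim=> [a' b' [u v [e s]] | a' | a' b' _ IH | a' b' c' _ IH1 _ IH2] //; last by rewrite IH1.
rewrite !walk_word_cat !weval_cat /=.
by congr gmul; case: s; rewrite /= ?gmulKg ?gmulKVg.
Qed.

Lemma weval_pi1r r (x0 : H) c : pi1r_mem r (x0 : vtx G) c -> ev (walk_word c) = one.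
Proof.
elim=> {c} [W0 y Q _ [yQy _] | | a b _ IHa _ IHb | a _ IH | a b _ IH /weval_homotopic <- //].
- rewrite !walk_word_cat walk_word_rev !weval_cat weval_invw.
  by rewrite (gmul_idr (walk_word_end yQy)) gmul1 gmulVr.
- by [].
- by rewrite walk_word_cat weval_cat IHa IHb gmul1.
- by rewrite walk_word_rev weval_invw IH ginv1.
Qed.

Lemma dsrc_tr h d : dsrc (cay_tr h d) = gmul h (dsrc d).
Proof. by case: d => [[g s] [|]]; rewrite /dsrc /= ?gmulA. Qed.

Lemma dtgt_tr h d : dtgt (cay_tr h d) = gmul h (dtgt d).
Proof. by case: d => [[g s] [|]]; rewrite /dtgt /= ?gmulA. Qed.

Lemma is_walk_tr h g c y : @is_walk G g c y -> @is_walk G (gmul h g) (map (cay_tr h) c) (gmul h y).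
Proof.
elim: c g => [|d c IH] g /=; first by move=> ->.
by case=> <- cy; rewrite dsrc_tr dtgt_tr; split=> //; apply: IH.
Qed.

Lemma rev_walk_tr h c : rev_walk (map (cay_tr h) c) = map (cay_tr h) (rev_walk c).
Proof. by rewrite /rev_walk map_rev -!map_comp. Qed.

Lemma spell_tr h g w : spell (gmul h g) w = map (cay_tr h) (spell g w).
Proof.
elim: w g => [|[s b] w IH] g //=.
by rewrite -gmulA IH; case: b; rewrite /cay_step /cay_tr /= ?gmulA.
Qed.

Lemma homotopic_tr h a b : homotopic a b -> homotopic (map (cay_tr h) a) (map (cay_tr h) b).
Proof.
elim=> [a' b' [u v d] | a' | a' b' _ IH | a' b' c' _ IH1 _ IH2].
- by rewrite !map_cat; apply: rst_step; apply: HStep.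
- exact: rst_refl.
- exact: rst_sym.
- exact: rst_trans IH2.
Qed.

Lemma once_around_tr r h y Q :
  once_around (y : vtx G) Q r -> once_around (gmul h y : vtx G) (map (cay_tr h) Q) r.
Proof.
case=> yQy [sizeQ [edgesQ vtxQ]]; split; first exact: is_walk_tr.
split; first by rewrite size_map.
split.
  have -> : [seq d.1 | d <- map (cay_tr h) Q] =
            [seq (gmul h e.1, e.2) | e <- [seq d.1 | d <- Q]] by rewrite -!map_comp.
  by apply: FinFun.Injective_map_NoDup edgesQ => -[g s] [g' s'] /= [/gmulI -> ->].
have -> : map (@dsrc G) (map (cay_tr h) Q) = map (gmul h) (map (@dsrc G) Q).
  by rewrite -!map_comp; apply: eq_map => d; apply: dsrc_tr.
by apply: FinFun.Injective_map_NoDup vtxQ; apply: gmulI.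
Qed.

Lemma pi1r_tr r h (x0 : H) c :
  pi1r_mem r (x0 : vtx G) c -> pi1r_mem r (gmul h x0 : vtx G) (map (cay_tr h) c).
Proof.
elim=> {c} [W0 y Q x0W0 Q_cyc | | a b _ IHa _ IHb | a _ IH | a b _ IH ab].
- rewrite !map_cat -rev_walk_tr.
  exact: P_lasso (is_walk_tr h x0W0) (once_around_tr h Q_cyc).
- exact: P_nil.
- by rewrite map_cat; apply: P_cat.
- by rewrite -rev_walk_tr; apply: P_inv.
- exact: P_hom IH (homotopic_tr h ab).
Qed.

Lemma connected_weval_surj : connected G -> forall h, exists w, ev w = h.
Proof.
move=> Gconn h; have [c onec] := Gconn one h.
by exists (walk_word c); rewrite -(walk_word_end onec) gmul1.
Qed.

Lemma Cay_connected : (forall h, exists w, ev w = h) -> connected G.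
Proof.
move=> ev_surj g g'; have [w ev_w] := ev_surj (gmul (ginv g) g').
by exists (spell g w); rewrite -(gmulKVg g g') -ev_w; apply: spell_walk.
Qed.

Lemma locally_finite_gens : locally_finite G -> exists l : seq A, forall s, List.In s l.
Proof.
move=> Glf; have [l incident] := Glf one.
by exists (map snd l) => s; apply: (List.in_map snd l (one, s)); apply: incident; left.
Qed.

Lemma Cay_locally_finite (l : seq A) : (forall s, List.In s l) -> locally_finite G.
Proof.
move=> l_cover g; exists ([seq (g, s) | s <- l] ++ [seq (gmul g (ginv (sval s)), s) | s <- l]).
case=> g' s /= [<- | g's_g]; apply: List.in_or_app.
  by left; apply: (List.in_map (fun s => (g', s))).
right; have -> : g' = gmul g (ginv (sval s)) by rewrite -g's_g -gmulA gmulVr gmulr1.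
exact: (List.in_map (fun s0 : A => (gmul g (ginv (sval s0)), s0))).
Qed.

End CayleyWalks.

Section LocalGroup.
Variables (H : grp) (T : H -> Prop) (r : nat).
Local Notation G := (Cay T).
Local Notation A := {t : H | T t}.
Local Notation one := (gone H).
Local Notation ev := (weval (fun s : A => sval s)).
Implicit Types (a b w : seq (A * bool)).

Definition rloc a b : Prop :=
  pi1r_mem r (one : vtx G) (spell one a ++ rev_walk (spell one b)).

Lemma rloc_refl a : rloc a a.
Proof. exact: pi1r_catrev. Qed.

Lemma rloc_sym a b : rloc a b -> rloc b a.
Proof. exact: pi1r_sym. Qed.

Lemma rloc_trans a b c : rloc a b -> rloc b c -> rloc a c.
Proof. exact: pi1r_replace. Qed.

Lemma rloc_weval a b : rloc a b -> ev a = ev b.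
Proof.
move/weval_pi1r; rewrite walk_word_cat walk_word_rev !walk_word_spell weval_cat weval_invw.
exact: gmulV_eq1.
Qed.

Lemma rloc_catr a a' b : rloc a a' -> rloc (a ++ b) (a' ++ b).
Proof.
move=> aa'; rewrite /rloc !spell_cat (rloc_weval aa') rev_walk_cat.
apply: P_hom aa' _; apply: rst_sym.
have := homotopic_del (spell one a) (rev_walk (spell one a')) (spell (gmul one (ev a')) b).
by rewrite -!catA.
Qed.

(* Left multiplication by the value of u is a graph automorphism carrying the
   walks spelled from 1 onto those spelled from that value. *)
Lemma rloc_catl u a b : rloc a b -> rloc (u ++ a) (u ++ b).
Proof.
move=> ab; set h := gmul one (ev u).
have spell_h w : spell h w = map (cay_tr h) (spell one w) by rewrite -spell_tr gmulr1.
have h_ab := pi1r_tr h ab; rewrite gmulr1 map_cat in h_ab.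
have := pi1r_conj (spell_walk one u) h_ab.
by rewrite /rloc !spell_cat rev_walk_cat !spell_h rev_walk_tr -!catA.
Qed.

Lemma rloc_cancel s (b : bool) : rloc [:: (s, b); (s, ~~ b)] [::].
Proof.
rewrite /rloc /= cay_step_cancel.
apply: (P_hom (P_nil r _)); apply: rst_sym; apply: rst_step.
exact: (HStep [::] [::] (cay_step one (s, b))).
Qed.

Lemma cycle_rloc y Q : once_around (y : vtx G) Q r -> rloc (walk_word Q) [::].
Proof.
move=> Q_cyc; rewrite /rloc /= cats0.
have -> : spell one (walk_word Q) = map (cay_tr (ginv y)) Q.
  by rewrite -(gmulV y) spell_tr (spell_walk_word (proj1 Q_cyc)).
rewrite -(gmulV y); apply: pi1r_tr.
by have := @P_lasso G r (y : vtx G) [::] y Q erefl Q_cyc; rewrite /= cats0.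
Qed.

Definition rloc_congruence : word_congruence A :=
  WordCongruence rloc_refl rloc_sym rloc_trans rloc_catl rloc_catr rloc_cancel.

Definition local_grp : grp := word_grp rloc_congruence.

Local Notation cls := (mkw rloc_congruence).

Lemma cls_eq a b : cls a = cls b <-> rloc a b.
Proof. exact: mkw_eq. Qed.

Lemma rloc_repw a : rloc (repw (cls a)) a.
Proof. exact: (repw_mkw rloc_congruence a). Qed.

Lemma weval_repw a : ev (repw (cls a)) = ev a.
Proof. exact: rloc_weval (rloc_repw a). Qed.

Lemma local_grp_quotient : connected G -> is_quotient_of H local_grp.
Proof.
move=> Gconn; exists (fun x => ev (repw x)); split.
  by move=> x y; rewrite [gmul x y]/= weval_repw weval_cat.
move=> h; have [w <-] := connected_weval_surj Gconn h.
by exists (cls w); rewrite weval_repw.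
Qed.

Definition local_gens (x : local_grp) : Prop := exists s, x = cls [:: (s, true)].

Definition local_gen (s : A) : {x : local_grp | local_gens x} :=
  exist _ (cls [:: (s, true)]) (ex_intro _ s erefl).

Lemma local_gen_inj : injective local_gen.
Proof.
move=> s s' /(congr1 sval) /cls_eq /rloc_weval /=; rewrite !gmulr1; exact: sval_inj.
Qed.

Lemma local_gen_surj t : exists s, t = local_gen s.
Proof. by case: t => x [s xs]; exists s; apply: sval_inj. Qed.

Definition local_gen_label t : A := sval (constructive_indefinite_description _ (local_gen_surj t)).

Lemma local_gen_labelK : cancel local_gen_label local_gen.
Proof. by move=> t; rewrite /local_gen_label; case: constructive_indefinite_description. Qed.

Lemma local_genK : cancel local_gen local_gen_label.
Proof. by move=> s; apply: local_gen_inj; rewrite local_gen_labelK. Qed.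

Lemma local_gens_connected : connected (Cay local_gens).
Proof.
apply: Cay_connected => x; have [a ->] := mkw_surj x.
by exists (relabel local_gen a); rewrite weval_relabel; apply: weval_mkw.
Qed.

Lemma local_gens_locally_finite (l : seq A) :
  (forall s, List.In s l) -> locally_finite (Cay local_gens).
Proof.
move=> l_cover; apply: (@Cay_locally_finite _ _ (map local_gen l)) => t.
by have [s ->] := local_gen_surj t; apply: List.in_map.
Qed.

Local Notation LC := (local_cover (G := G) r (one : vtx G)).

Definition lc_walk (C : vtx LC) : seq (dart G) :=
  sval (constructive_indefinite_description _
         (proj2_sig (constructive_indefinite_description _ (proj2_sig C)))).

Lemma lc_walkP C : exists y, @is_walk G one (lc_walk C) y /\ sval C = rclass r (one : vtx G) y (lc_walk C).
Proof.
rewrite /lc_walk; case: (constructive_indefinite_description _ (proj2_sig C)) => y /= exW.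
by case: (constructive_indefinite_description _ exW) => W /= [oneWy CW]; exists y.
Qed.

Definition lc_to_grp (C : vtx LC) : local_grp := cls (walk_word (lc_walk C)).

Lemma lc_to_grp_rclass C y W : @is_walk G one W y -> sval C = rclass r (one : vtx G) y W ->
  lc_to_grp C = cls (walk_word W).
Proof.
move=> oneWy CW; have [y' [oneW'y' CW']] := lc_walkP C.
apply/cls_eq; rewrite /rloc (spell_walk_word oneW'y') (spell_walk_word oneWy).
exact: rclass_pi1r oneWy (etrans (esym CW) CW').
Qed.

Definition lc_vertex a : vtx LC :=
  exist _ (rclass r (one : vtx G) (gmul one (ev a)) (spell one a))
        (ex_intro _ _ (ex_intro _ (spell one a) (conj (spell_walk one a) erefl))).

Lemma lc_to_grp_vertex a : lc_to_grp (lc_vertex a) = cls a.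
Proof. by rewrite (lc_to_grp_rclass (C := lc_vertex a) (spell_walk one a) erefl) walk_word_spell. Qed.

Lemma lc_vertex_rclass C y W : @is_walk G one W y -> sval C = rclass r (one : vtx G) y W ->
  C = lc_vertex (walk_word W).
Proof.
by move=> oneWy CW; apply: sval_inj; rewrite CW /= (spell_walk_word oneWy) (walk_word_end oneWy).
Qed.

Lemma lc_vertex_rloc a b : rloc a b -> lc_vertex a = lc_vertex b.
Proof. by move=> ab; apply: sval_inj => /=; rewrite (rloc_weval ab); apply: rclass_eq. Qed.

Definition grp_to_lc (x : local_grp) : vtx LC := lc_vertex (repw x).

Lemma lc_to_grpK : cancel lc_to_grp grp_to_lc.
Proof.
move=> C; have [y [oneWy CW]] := lc_walkP C.
rewrite /grp_to_lc (lc_to_grp_rclass oneWy CW) (lc_vertex_rloc (rloc_repw _)).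
exact: esym (lc_vertex_rclass oneWy CW).
Qed.

Lemma grp_to_lcK : cancel grp_to_lc lc_to_grp.
Proof. by move=> x; rewrite /grp_to_lc lc_to_grp_vertex mkw_repw. Qed.

Definition lc_edge a (s : A) : edg LC :=
  let g := gmul one (ev a) in
  exist _ (sval (lc_vertex a), ((g, s) : edg G),
           rclass r (one : vtx G) (gmul g (sval s)) (spell one a ++ [:: ((g, s), true)]))
        (ex_intro _ (spell one a) (conj (spell_walk one a) (conj erefl erefl))).

Lemma lc_tl_edge a s : lc_tl (lc_edge a s) = lc_vertex a.
Proof. exact: sval_inj. Qed.

Lemma lc_to_grp_tl_end (t : edg LC) : gmul one (ev (repw (lc_to_grp (lc_tl t)))) = tl (sval t).1.2.
Proof.
have [W [oneW [E1 _]]] := svalP t.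
by rewrite (lc_to_grp_rclass (C := lc_tl t) oneW E1) weval_repw (walk_word_end oneW).
Qed.

Definition lc_edge_to_grp (t : edg LC) : edg (Cay local_gens) :=
  (lc_to_grp (lc_tl t), local_gen (sval t).1.2.2).

Definition grp_edge_to_lc (p : edg (Cay local_gens)) : edg LC :=
  lc_edge (repw p.1) (local_gen_label p.2).

Lemma lc_edge_to_grpK : cancel lc_edge_to_grp grp_edge_to_lc.
Proof.
move=> t; apply: lc_edg_eq.
have -> : (sval (grp_edge_to_lc (lc_edge_to_grp t))).1 =
          (sval (grp_to_lc (lc_to_grp (lc_tl t))), (tl (sval t).1.2, (sval t).1.2.2)).
  by rewrite /= local_genK lc_to_grp_tl_end.
rewrite lc_to_grpK.
by rewrite /=; case: (sval t) => [[C1 [g s]] C2].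
Qed.

Lemma grp_edge_to_lcK : cancel grp_edge_to_lc lc_edge_to_grp.
Proof.
case=> x t; rewrite /lc_edge_to_grp /grp_edge_to_lc lc_tl_edge local_gen_labelK.
by rewrite -[lc_vertex _]/(grp_to_lc x) grp_to_lcK.
Qed.

Lemma lc_edge_to_grp_ends (t : edg LC) :
  tl (lc_edge_to_grp t) = lc_to_grp (tl t) /\ hd (lc_edge_to_grp t) = lc_to_grp (hd t).
Proof.
split=> //; have [W [oneW [E1 E2]]] := svalP t.
rewrite /lc_edge_to_grp /= (lc_to_grp_rclass (C := lc_tl t) oneW E1).
rewrite (lc_to_grp_rclass (C := lc_hd t) (@is_walk_rcons _ _ _ _ ((sval t).1.2, true) oneW erefl) E2) walk_word_cat.
exact: gmul_mkw.
Qed.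

Lemma local_cover_iso : mg_iso LC (Cay local_gens).
Proof.
exists lc_to_grp, lc_edge_to_grp; split; first exact: Bijective lc_to_grpK grp_to_lcK.
split; first exact: Bijective lc_edge_to_grpK grp_edge_to_lcK.
exact: lc_edge_to_grp_ends.
Qed.

End LocalGroup.

Section LocalPresentation.
Variables (H : grp) (T : H -> Prop) (r : nat).
Local Notation G := (Cay T).
Local Notation A := {t : H | T t}.
Local Notation rloc := (@rloc H T r).
Local Notation cls := (mkw (rloc_congruence T r)).
Variable l : seq A.
Hypothesis l_cover : forall s, List.In s l.
Local Notation X := (fin_index l_cover).
Local Notation encode := (relabel (fin_encode l_cover)).
Local Notation decode := (relabel (@fin_decode _ _ l_cover)).

Definition local_relators : seq (seq (X * bool)) :=
  [seq w <- short_words _ r | excluded_middle_informative (rloc (decode w) [::])].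

Lemma relator_rloc w : List.In w local_relators -> rloc (decode w) [::].
Proof. by move/InP; rewrite mem_filter => /andP [/sumboolP]. Qed.

Lemma rloc_relator w : size w <= r -> rloc (decode w) [::] -> List.In w local_relators.
Proof.
move=> wr w1; apply/InP; rewrite mem_filter mem_short_words // andbT.
exact/sumboolP.
Qed.

Lemma pres_rloc a b : pres_eq local_relators a b -> rloc (decode a) (decode b).
Proof.
elim=> [a' b' [u v x c | u v rr /relator_rloc rr1] | a' | a' b' _ IH | a' b' c' _ IH1 _ IH2].
- by rewrite !relabel_cat; apply: rloc_catl (rloc_catr _ (rloc_cancel r _ _)).
- by rewrite !relabel_cat; apply: rloc_catl (rloc_catr _ rr1).
- exact: rloc_refl.
- exact: rloc_sym.
- exact: rloc_trans IH2.
Qed.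

Lemma pi1r_pres (x0 : H) c :
  pi1r_mem r (x0 : vtx G) c -> pres_eq local_relators (encode (walk_word c)) [::].
Proof.
elim=> {c} [W0 y Q _ Q_cyc | | a b _ IHa _ IHb | a _ IH | a b _ IH ab].
- rewrite !walk_word_cat walk_word_rev !relabel_cat relabel_invw.
  apply: pres_eq_conj; apply: rloc_relator.
    by rewrite !size_map; case: Q_cyc => _ [/andP [_ ->]].
  by rewrite (relabelK (fin_encodeK l_cover)); apply: cycle_rloc Q_cyc.
- exact: rst_refl.
- by rewrite walk_word_cat relabel_cat; apply: (pres_eq_cat IHa IHb).
- by rewrite walk_word_rev relabel_invw; apply: pres_eq_invw.
- exact: rst_trans (rst_sym _ _ _ _ (homotopic_relabel _ _ ab)) IH.
Qed.

Lemma local_grp_finitely_presented : finitely_presented (local_grp T r).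
Proof.
pose gam (i : X) : local_grp T r := cls [:: (fin_decode i, true)].
have weval_gam w : weval gam w = cls (decode w).
  by rewrite -(weval_mkw _ (decode w)) weval_relabel.
exists X, gam, local_relators; split.
  move=> x; have [a ->] := mkw_surj x; exists (encode a).
  by rewrite weval_gam (relabelK (fin_encodeK l_cover)).
move=> w; rewrite weval_gam; change (cls (decode w) = cls [::] <-> pres_eq local_relators w [::]).
rewrite cls_eq; split=> [|/pres_rloc //].
rewrite /rloc /= cats0 => /pi1r_pres.
by rewrite walk_word_spell (relabelK (@fin_decodeK _ _ l_cover)).
Qed.

End LocalPresentation.

Theorem theorem4p10 (Gam : grp) (S : Gam -> Prop) (r : nat) :
  connected (Cay S) -> locally_finite (Cay S) ->
  exists (Gr : grp) (Sr : Gr -> Prop),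
    connected (Cay Sr) /\ locally_finite (Cay Sr) /\
    finitely_presented Gr /\ is_quotient_of Gam Gr /\
    mg_iso (local_cover (G := Cay S) r (gone Gam)) (Cay Sr).
Proof.
move=> S_conn S_lf; have [l l_cover] := locally_finite_gens S_lf.
exists (local_grp S r), (local_gens (T := S) (r := r)).
split; first exact: local_gens_connected.
split; first exact: local_gens_locally_finite l_cover.
split; first exact: local_grp_finitely_presented l_cover.
split; first exact: local_grp_quotient.
exact: local_cover_iso.
Qed.
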